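(* Let $R$ be a Dedekind domain, $I\subseteq R$ an ideal with $R/I$ finite, and $G\in R^{n\times n}$. Let $U,V\in\mathrm{GL}_n(R/I)$ and $d_1,\ldots,d_n\in R$ with $d_{i+1}R+I\subseteq d_iR+I$ for every $i$ be such that $G\equiv U D V\bmod I$ with $D=\mathrm{diag}(d_1,\ldots,d_n)$. Consider a random symmetric $n\times n$ matrix $X\in R^{n\times n}$ whose upper-triangular entries $\{X_{i,j}:i\leq j\}$ have independent and uniformly distributed reductions in $R/I$. Then $$\mathbb{P}\bigl(G^{T}XG\equiv 0\bmod I\bigr)=\prod_{i=1}^n\prod_{j=i}^n\frac{\mathcal{N}_R(d_id_jR+I)}{\mathcal{N}_R(I)}.$$
   Context: The norm of an ideal $J\subseteq R$ is $\mathcal{N}_R(J)=\#(R/J)$. Such $U,V,d_1,\ldots,d_n$ (a Smith normal form of $G$ over $R/I$) always exist since $R/I$ is a principal ideal ring. *)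

From HB Require Import structures.
From mathcomp Require Import all_boot all_order all_algebra.
From mathcomp Require Import boolp.
From Stdlib Require Import ClassicalEpsilon.
Set Implicit Arguments. Unset Strict Implicit. Unset Printing Implicit Defensive.
Import Order.TTheory GRing.Theory Num.Theory.
Local Open Scope ring_scope.

Definition is_ideal (R : comNzRingType) (J : R -> Prop) : Prop :=
  [/\ J 0, (forall x y, J x -> J y -> J (x + y)) & (forall r x, J x -> J (r * x))].

Definition ideal_sub (R : comNzRingType) (J K : R -> Prop) : Prop :=
  forall x, J x -> K x.

Definition principal_plus (R : comNzRingType) (a : R) (J : R -> Prop) : R -> Prop :=
  fun x => exists r y, J y /\ x = a * r + y.

Definition prime_ideal (R : comNzRingType) (P : R -> Prop) : Prop :=
  [/\ is_ideal P, ~ P 1 & forall x y, P (x * y) -> P x \/ P y].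

Definition maximal_ideal (R : comNzRingType) (M : R -> Prop) : Prop :=
  [/\ is_ideal M, ~ M 1 &
      forall J, is_ideal J -> ideal_sub M J -> ideal_sub J M \/ J 1].

Definition noetherian (R : comNzRingType) : Prop :=
  forall J : R -> Prop, is_ideal J ->
    exists (m : nat) (g : 'I_m -> R),
      forall x, J x <-> exists c : 'I_m -> R, x = \sum_(i < m) c i * g i.

Definition integrally_closed (R : idomainType) : Prop :=
  forall x : {fraction R},
    (exists p : {poly R}, p \is monic /\ root (map_poly (@FracField.tofrac R) p) x) ->
    exists r : R, x = @FracField.tofrac R r.

Definition dedekind_domain (R : idomainType) : Prop :=
  [/\ noetherian R, integrally_closed R &
      forall P : R -> Prop, prime_ideal P -> (exists x, P x /\ x != 0) -> maximal_ideal P].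

(* s is a complete, irredundant system of representatives of R/J *)
Definition reps (R : comNzRingType) (J : R -> Prop) (s : seq R) : Prop :=
  (forall x, exists2 y, y \in s & J (x - y)) /\
  (forall a b : nat, (a < size s)%N -> (b < size s)%N -> J (s`_a - s`_b) -> a = b).

Definition index_is (R : comNzRingType) (J : R -> Prop) (k : nat) : Prop :=
  exists s : seq R, size s = k /\ reps J s.

(* The norm N_R(J) = #(R/J) (meaningful when R/J is finite). *)
Definition ideal_norm (R : comNzRingType) (J : R -> Prop) : nat :=
  epsilon (inhabits 0%N) (fun k => index_is J k).

Definition mxcong (R : comNzRingType) (J : R -> Prop) (m n : nat)
  (A B : 'M[R]_(m, n)) : Prop := forall i j, J (A i j - B i j).

Definition unit_mod (R : comNzRingType) (J : R -> Prop) (n : nat) (U : 'M[R]_n) : Prop :=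
  exists W : 'M[R]_n, mxcong J (U *m W) 1%:M /\ mxcong J (W *m U) 1%:M.

(* Symmetric index patterns: choices of a residue class (index into s) for
   each entry, equal on (i,j) and (j,i); uniform over these = independent
   uniform reductions of the upper-triangular entries. *)
Definition sym_patterns (n k : nat) : {set {ffun 'I_n * 'I_n -> 'I_k}} :=
  [set f : {ffun 'I_n * 'I_n -> 'I_k} | [forall i : 'I_n, forall j : 'I_n, f (i, j) == f (j, i)]].

Definition mx_of_pattern (R : comNzRingType) (s : seq R) (n : nat)
  (f : {ffun 'I_n * 'I_n -> 'I_(size s)}) : 'M[R]_n :=
  \matrix_(i < n, j < n) s`_(f (i, j)).

Definition prob_GtXG_zero (R : comNzRingType) (I : R -> Prop) (s : seq R) (n : nat)
  (G : 'M[R]_n) : rat :=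
  (#|[set f in sym_patterns n (size s) |
        `[< mxcong I (G^T *m mx_of_pattern f *m G) 0 >] ]|%:R)
  / (#|sym_patterns n (size s)|%:R).

From HB Require Import structures.
From mathcomp Require Import all_boot all_order all_algebra.
From Stdlib Require Import ClassicalEpsilon.
From mathcomp Require Import boolp.
From mathcomp Require Import ring.
Set Implicit Arguments. Unset Strict Implicit. Unset Printing Implicit Defensive.
Import Order.TTheory GRing.Theory Num.Theory.
Local Open Scope ring_scope.

(* Since V is invertible mod I, G^T X G = 0 mod I iff
   D (U^T X U) D = 0 mod I, and since U is invertible mod I, X |-> U^T X U
   permutes the symmetric matrices over R/I.  It remains to count symmetric Y
   over R/I with d_i d_j Y_ij in I for i <= j: these conditions are independent,
   and a y = 0 has #(R/I) / #((aR + I)/I) = N(aR + I) solutions y in R/I. *)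

Section IdealCongruence.
Variables (R : comNzRingType) (J : R -> Prop).
Hypothesis idJ : is_ideal J.

Lemma ideal0 : J 0. Proof. by case: idJ. Qed.

Lemma idealD x y : J x -> J y -> J (x + y). Proof. by case: idJ => _ + _; apply. Qed.

Lemma idealMl r x : J x -> J (r * x). Proof. by case: idJ => _ _; apply. Qed.

Lemma idealMr r x : J x -> J (x * r). Proof. by rewrite mulrC; apply: idealMl. Qed.

Lemma idealN x : J x -> J (- x). Proof. by rewrite -mulN1r; apply: idealMl. Qed.

Lemma idealB x y : J x -> J y -> J (x - y).
Proof. by move=> Jx /idealN; apply: idealD. Qed.

Lemma ideal_sum (T : Type) (r : seq T) (P : pred T) (F : T -> R) :
  (forall i, P i -> J (F i)) -> J (\sum_(i <- r | P i) F i).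
Proof. by move=> JF; apply: big_ind => //; [apply: ideal0 | apply: idealD]. Qed.

Lemma cong_refl x : J (x - x). Proof. by rewrite subrr; apply: ideal0. Qed.

Lemma cong_sym x y : J (x - y) -> J (y - x). Proof. by move/idealN; rewrite opprB. Qed.

Lemma cong_trans x y z : J (x - y) -> J (y - z) -> J (x - z).
Proof. by move=> Jxy /(idealD Jxy); rewrite addrA subrK. Qed.

Lemma mxcong_refl m n (A : 'M[R]_(m, n)) : mxcong J A A.
Proof. by move=> i j; apply: cong_refl. Qed.

Lemma mxcong_sym m n (A B : 'M[R]_(m, n)) : mxcong J A B -> mxcong J B A.
Proof. by move=> AB i j; apply: cong_sym. Qed.

Lemma mxcong_trans m n (A B C : 'M[R]_(m, n)) :
  mxcong J A B -> mxcong J B C -> mxcong J A C.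
Proof. by move=> AB BC i j; apply: cong_trans (AB i j) (BC i j). Qed.

Lemma mxcong_tr m n (A B : 'M[R]_(m, n)) : mxcong J A B -> mxcong J A^T B^T.
Proof. by move=> AB i j; rewrite !mxE; apply: AB. Qed.

Lemma mxcong_mul m n p (A A' : 'M[R]_(m, n)) (B B' : 'M[R]_(n, p)) :
  mxcong J A A' -> mxcong J B B' -> mxcong J (A *m B) (A' *m B').
Proof.
move=> AA' BB' i j; rewrite !mxE -sumrB; apply: ideal_sum => k _.
have -> : A i k * B k j - A' i k * B' k j =
  (A i k - A' i k) * B k j + A' i k * (B k j - B' k j) by ring.
by apply: idealD; [apply: idealMr | apply: idealMl].
Qed.

Lemma mxcong_sandwich m n p q (A : 'M[R]_(m, n)) (B B' : 'M[R]_(n, p))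
    (C : 'M[R]_(p, q)) :
  mxcong J B B' -> mxcong J (A *m B *m C) (A *m B' *m C).
Proof.
by move=> BB'; apply: mxcong_mul (mxcong_refl C); apply: mxcong_mul (mxcong_refl A) _.
Qed.

Lemma mxcong_conj m n (A B : 'M[R]_(m, n)) (Y : 'M[R]_m) :
  mxcong J A B -> mxcong J (A^T *m Y *m A) (B^T *m Y *m B).
Proof. by move=> AB; apply: mxcong_mul (mxcong_mul (mxcong_tr AB) (mxcong_refl Y)) AB. Qed.

Lemma mxcong_conj_cancel n (U W Y : 'M[R]_n) : mxcong J (U *m W) 1%:M ->
  mxcong J (W^T *m (U^T *m Y *m U) *m W) Y.
Proof.
have -> : W^T *m (U^T *m Y *m U) *m W = (U *m W)^T *m Y *m (U *m W).
  by rewrite !trmx_mul !mulmxA.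
by move/(mxcong_conj Y); rewrite trmx1 mul1mx mulmx1.
Qed.

Lemma unit_mod_conj_inj n (U A B : 'M[R]_n) : unit_mod J U ->
  mxcong J (U^T *m A *m U) (U^T *m B *m U) -> mxcong J A B.
Proof.
case=> W [UW _] AB; apply: mxcong_trans (mxcong_sym (mxcong_conj_cancel A UW)) _.
exact: mxcong_trans (mxcong_sandwich _ _ AB) (mxcong_conj_cancel B UW).
Qed.

Lemma unit_mod_conj_eq0 n (V A : 'M[R]_n) : unit_mod J V ->
  mxcong J (V^T *m A *m V) 0 <-> mxcong J A 0.
Proof.
have conj0 : V^T *m 0 *m V = 0 by rewrite mulmx0 mul0mx.
move=> unitV; split=> [|A0]; first by rewrite -{1}conj0; apply: unit_mod_conj_inj.
by rewrite -conj0; apply: mxcong_sandwich.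
Qed.

Lemma smith_conj_cong0 n (G U D V Y : 'M[R]_n) :
  D^T = D -> unit_mod J V -> mxcong J G (U *m D *m V) ->
  mxcong J (G^T *m Y *m G) 0 <-> mxcong J (D *m (U^T *m Y *m U) *m D) 0.
Proof.
set M := D *m (U^T *m Y *m U) *m D.
move=> symD unitV congG; rewrite -(unit_mod_conj_eq0 M unitV).
have -> : V^T *m M *m V = (U *m D *m V)^T *m Y *m (U *m D *m V).
  by rewrite !trmx_mul symD !mulmxA.
have congGYG := mxcong_conj Y congG.
by split; apply: mxcong_trans; [apply: mxcong_sym | ].
Qed.

Lemma ideal_cong (I : R -> Prop) x y :
  ideal_sub I J -> I (x - y) -> J x -> J y.
Proof.
move=> IJ /IJ Jxy Jx; suff -> : y = x - (x - y) by apply: idealB.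
by rewrite opprB addrC subrK.
Qed.
End IdealCongruence.

Lemma principal_plus_ideal (R : comNzRingType) (I : R -> Prop) (a : R) :
  is_ideal I -> is_ideal (principal_plus a I).
Proof.
move=> idI; split.
- by exists 0, 0; rewrite mulr0 addr0; split=> //; apply: ideal0.
- move=> _ _ [r [x [Ix ->]]] [r' [x' [Ix' ->]]].
  exists (r + r'), (x + x'); split; first exact: idealD.
  by rewrite mulrDr addrACA.
- move=> r _ [r' [x [Ix ->]]].
  exists (r * r'), (r * x); split; first exact: idealMl.
  by rewrite mulrDr mulrCA.
Qed.

Lemma principal_plus_sub (R : comNzRingType) (I : R -> Prop) (a : R) :
  ideal_sub I (principal_plus a I).
Proof. by move=> x Ix; exists 0, x; rewrite mulr0 add0r. Qed.

Lemma principal_plus_mul (R : comNzRingType) (I : R -> Prop) (a r : R) :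
  is_ideal I -> principal_plus a I (a * r).
Proof. by move=> idI; exists r, 0; rewrite addr0; split=> //; apply: ideal0. Qed.

Lemma mul_diag_mx2 (R : comNzRingType) n (a b : 'rV[R]_n) (Y : 'M[R]_n) i j :
  (diag_mx a *m Y *m diag_mx b) i j = a 0 i * Y i j * b 0 j.
Proof. by rewrite mul_mx_diag mxE mul_diag_mx mxE. Qed.

Section ResidueSystems.
Variables (R : comNzRingType) (J : R -> Prop).
Hypothesis idJ : is_ideal J.

Lemma reps_residue s : reps J s -> forall x, exists t : 'I_(size s), J (x - s`_t).
Proof.
case=> cover_s _ x; have [y ys Jxy] := cover_s x.
have ys' : (index y s < size s)%N by rewrite index_mem.
by exists (Ordinal ys'); rewrite /= nth_index.
Qed.

Lemma reps_inj s : reps J s ->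
  forall t u : 'I_(size s), J (s`_t - s`_u) -> t = u.
Proof. by case=> _ inj t u Jtu; apply: ord_inj; apply: inj (ltn_ord t) (ltn_ord u) Jtu. Qed.

Lemma reps_size_le s1 s2 : reps J s1 -> reps J s2 -> (size s1 <= size s2)%N.
Proof.
move=> reps1 reps2.
have [f Jf] := choice (fun t : 'I_(size s1) => reps_residue reps2 s1`_t).
suff /leq_card : injective f by rewrite !card_ord.
move=> t t' ftt'; apply: (reps_inj reps1); apply: (cong_trans idJ (Jf t)).
by rewrite ftt'; exact (cong_sym idJ (Jf t')).
Qed.

Lemma ideal_norm_reps s : reps J s -> ideal_norm J = size s.
Proof.
have index_uniq k1 k2 : index_is J k1 -> index_is J k2 -> k1 = k2.
  by move=> [s1 [<- reps1]] [s2 [<- reps2]]; apply/eqP; rewrite eqn_leq !reps_size_le.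
move=> reps_s; apply: (index_uniq _ _ _ (ex_intro _ s (conj erefl reps_s))).
by apply: epsilon_spec; exists (size s), s.
Qed.
End ResidueSystems.

Section ResidueCounting.
Variables (R : comNzRingType) (I : R -> Prop) (s : seq R).
Hypotheses (idI : is_ideal I) (reps_s : reps I s).
Variable residue : R -> 'I_(size s).
Hypothesis residueP : forall x, I (x - s`_(residue x)).

Local Notation k := (size s).

Lemma residue_eq x (t : 'I_k) : I (x - s`_t) -> residue x = t.
Proof.
by move=> Ixt; apply: (reps_inj reps_s); exact (cong_trans idI (cong_sym idI (residueP x)) Ixt).
Qed.

Lemma card_residues_translate (P : R -> Prop) c :
    (forall x y, I (x - y) -> P x -> P y) ->
  #|[set t : 'I_k | `[< P (s`_t + c) >]]| = #|[set t : 'I_k | `[< P s`_t >]]|.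
Proof.
move=> P_cong; pose shift (t : 'I_k) := residue (s`_t + c).
have shift_inj : injective shift.
  move=> t u tu; apply: (reps_inj reps_s).
  have := cong_sym idI (residueP (s`_u + c)); rewrite -[residue _]tu.
  by move/(cong_trans idI (residueP _)); rewrite opprD addrACA subrr addr0.
rewrite -[RHS](card_preimset _ shift_inj); apply: eq_card => t; rewrite !inE.
apply/asboolP/asboolP; apply: P_cong; first exact: residueP.
exact (cong_sym idI (residueP _)).
Qed.

Variable a : R.
Local Notation J := (principal_plus a I).

Let idJ : is_ideal J. Proof. exact: principal_plus_ideal. Qed.

Definition mul_kernel := [set t : 'I_k | `[< I (a * s`_t) >]].
Definition mul_image := [set t : 'I_k | `[< J s`_t >]].

(* The fibres of multiplication by a on R/I are translates of its kernel. *)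
Lemma size_reps_image_kernel : k = (#|mul_image| * #|mul_kernel|)%N.
Proof.
pose mul_a (t : 'I_k) := residue (a * s`_t).
have mul_aJ t : mul_a t \in mul_image.
  rewrite inE; apply/asboolP; apply: ideal_cong (residueP _) _.
  - exact: principal_plus_ideal.
  - exact: principal_plus_sub.
  - exact: principal_plus_mul.
transitivity (\sum_(t : 'I_k) 1)%N; first by rewrite sum1_card card_ord.
rewrite (partition_big mul_a (mem mul_image)) //= -sum_nat_const.
apply: eq_bigr => u; rewrite inE => /asboolP[r [z [Iz su]]].
pose c := s`_(residue r).
have Isu : I (s`_u - a * c).
  by rewrite su addrAC -mulrBr; apply: idealD idI _ _ (idealMl idI _ (residueP r)) Iz.
rewrite sum1dep_card -(card_residues_translate (P := fun x => I (a * x)) (- c)); last first.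
  by move=> x y /(idealMl idI a) Ixy /(idealB idI)/(_ Ixy); rewrite -mulrBr opprB addrC subrK.
apply: eq_card => t; rewrite !inE; apply/eqP/asboolP => [tu | Iat].
  by rewrite -tu in Isu; rewrite mulrBr; exact (cong_trans idI (residueP _) Isu).
by rewrite mulrDr mulrN in Iat; exact (residue_eq (cong_trans idI Iat (cong_sym idI Isu))).
Qed.

Definition coset_rel : rel 'I_k := fun t u => `[< J (s`_t - s`_u) >].

Lemma coset_rel_equiv : {in [set: 'I_k] & &, equivalence_rel coset_rel}.
Proof.
move=> t u v _ _ _; split; first exact/asboolP/(cong_refl idJ).
move=> /asboolP Jtu; apply/asboolP/asboolP => [Jtv | Juv].
  exact (cong_trans idJ (cong_sym idJ Jtu) Jtv).
exact (cong_trans idJ Jtu Juv).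
Qed.

Definition cosets := equivalence_partition coset_rel [set: 'I_k].

Lemma cosets_partition : partition cosets [set: 'I_k].
Proof. exact: equivalence_partitionP coset_rel_equiv. Qed.

Lemma mem_coset_block t u : (u \in pblock cosets t) = coset_rel t u.
Proof. exact: (pblock_equivalence_partition coset_rel_equiv (in_setT t) (in_setT u)). Qed.

(* Each coset of (aR + I)/I in R/I is a translate of mul_image. *)
Lemma size_reps_cosets_image : k = (#|cosets| * #|mul_image|)%N.
Proof.
transitivity #|[set: 'I_k]|; first by rewrite cardsT card_ord.
rewrite (card_partition cosets_partition) -sum_nat_const.
apply: eq_bigr => _ /imsetP[t _ ->].
rewrite -(card_residues_translate (P := J) (- s`_t)); last first.
  move=> x y; exact (ideal_cong idJ (principal_plus_sub a)).
apply: eq_card => u; rewrite !inE /=.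
by apply/asboolP/asboolP; move/(cong_sym idJ).
Qed.

Definition coset_rep (B : {set 'I_k}) : 'I_k := odflt (residue 0) [pick t in B].

Lemma coset_rep_mem B : B \in cosets -> coset_rep B \in B.
Proof.
move=> cosetB; rewrite /coset_rep; case: pickP => [t -> // | B0].
have /and3P[_ _ /negP[]] := cosets_partition.
by rewrite -(_ : B = set0) //; apply/setP => t; rewrite inE B0.
Qed.

Definition coset_reps := [seq s`_(coset_rep B) | B <- enum cosets].

Lemma reps_coset_reps : reps J coset_reps.
Proof.
have tiP : trivIset cosets by case/and3P: cosets_partition.
split=> [x | i j].
  pose B := pblock cosets (residue x).
  have cosetB : B \in cosets.
    by apply: pblock_mem; rewrite (cover_partition cosets_partition) inE.
  exists s`_(coset_rep B); first by apply/mapP; exists B; rewrite ?mem_enum.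
  have /asboolP : coset_rel (residue x) (coset_rep B) by rewrite -mem_coset_block coset_rep_mem.
  exact/(cong_trans idJ (principal_plus_sub a (residueP x))).
rewrite size_map => ltik ltjk; rewrite !(nth_map set0) // => Jij.
set Bi := nth set0 (enum cosets) i; set Bj := nth set0 (enum cosets) j.
have cosetBi : Bi \in cosets by rewrite -mem_enum mem_nth.
have cosetBj : Bj \in cosets by rewrite -mem_enum mem_nth.
have Bi_j : coset_rep Bj \in Bi.
  by rewrite -(def_pblock tiP cosetBi (coset_rep_mem cosetBi)) mem_coset_block; apply/asboolP.
have eBij : Bi = Bj.
  by rewrite -(def_pblock tiP cosetBi Bi_j) (def_pblock tiP cosetBj (coset_rep_mem cosetBj)).
by apply/eqP; rewrite -(nth_uniq set0 ltik ltjk (enum_uniq _)); apply/eqP.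
Qed.

Lemma ideal_norm_principal_plus : ideal_norm J = #|mul_kernel|.
Proof.
rewrite (ideal_norm_reps idJ reps_coset_reps) size_map -cardE.
have k_gt0 : (0 < k)%N by case: reps_s => /(_ 0)[y]; case: (s).
have img_gt0 : (0 < #|mul_image|)%N.
  by move: k_gt0; rewrite [X in (0 < X)%N]size_reps_image_kernel muln_gt0 => /andP[].
apply/eqP; rewrite -(eqn_pmul2l img_gt0) -size_reps_image_kernel mulnC.
by rewrite -size_reps_cosets_image.
Qed.
End ResidueCounting.

Section SymmetricPatterns.
Variables (n k : nat) (t0 : 'I_k).
Local Notation pattern := {ffun 'I_n * 'I_n -> 'I_k}.
Local Notation upper p := (p.1 <= p.2)%N.

Lemma sym_patternP (f : pattern) :
  reflect (forall i j, f (i, j) = f (j, i)) (f \in sym_patterns n k).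
Proof.
rewrite inE; apply: (iffP forallP) => [symf i j | symf i].
  by apply/eqP; have /forallP := symf i; apply.
by apply/forallP => j; rewrite symf.
Qed.

Lemma sym_pattern_upper_inj (f g : pattern) :
  f \in sym_patterns n k -> g \in sym_patterns n k ->
  (forall p : 'I_n * 'I_n, upper p -> f p = g p) -> f = g.
Proof.
move=> /sym_patternP symf /sym_patternP symg fg; apply/ffunP => -[i j].
have [le_ij | /ltnW le_ji] := leqP i j; first exact: fg.
by rewrite symf symg; apply: fg.
Qed.

Lemma card_sym_patterns_upper (Q : 'I_n * 'I_n -> {set 'I_k}) :
  #|[set f in sym_patterns n k | [forall p : 'I_n * 'I_n, upper p ==> (f p \in Q p)]]| =
  (\prod_(p : 'I_n * 'I_n | upper p) #|Q p|)%N.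
Proof.
pose trunc (f : pattern) : pattern := [ffun p : 'I_n * 'I_n => if upper p then f p else t0].
pose F (p : 'I_n * 'I_n) := if upper p then Q p else [set t0].
rewrite -(card_in_imset (f := trunc)); last first.
  move=> f g; rewrite [f \in _]inE [g \in _]inE => /andP[symf _] /andP[symg _] /ffunP fg.
  apply: (sym_pattern_upper_inj symf symg) => p le_p.
  by have := fg p; rewrite !ffunE le_p.
set A := [set f in _ | _].
have -> : #|trunc @: A| = #|(family F : simpl_pred {dffun forall p : 'I_n * 'I_n, 'I_k})|.
  apply: eq_card => h; apply/imsetP/familyP => [[f] | Fh].
    rewrite inE => /andP[_ /forallP Qf] -> p; rewrite ffunE /F.
    by case: ifP => [le_p | _]; [have := Qf p; rewrite le_p | rewrite inE].
  exists [ffun p : 'I_n * 'I_n => if upper p then h p else h (p.2, p.1)].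
    rewrite inE; apply/andP; split.
      apply/sym_patternP => i j; rewrite !ffunE /=.
      by case: (ltngtP i j) => // /val_inj ->.
    apply/forallP => p; apply/implyP => le_p; rewrite ffunE le_p.
    by have := Fh p; rewrite /F le_p.
  apply/ffunP => p; rewrite !ffunE; case: ifP => le_p; first by rewrite le_p.
  by have := Fh p; rewrite /F le_p => /set1P ->.
rewrite card_family foldrE big_map big_enum /= (bigID (fun p : 'I_n * 'I_n => upper p)) /=.
rewrite [X in (_ * X)%N]big1 ?muln1 => [|p /negbTE le_p]; last by rewrite /F le_p cards1.
by apply: eq_bigr => p le_p; rewrite /F le_p.
Qed.

Lemma card_sym_patterns : #|sym_patterns n k| = (\prod_(p : 'I_n * 'I_n | upper p) k)%N.
Proof.
rewrite -[X in (_ = \prod_(_ | _) X)%N]card_ord -cardsT.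
rewrite -(card_sym_patterns_upper (fun _ => setT)); apply: eq_card => f.
rewrite [f \in [set _ in _ | _]]inE; case: (f \in _) => //=.
by apply/esym/forallP => p; rewrite in_setT implybT.
Qed.
End SymmetricPatterns.

Section RandomSymmetricMatrix.
Variables (R : comNzRingType) (I : R -> Prop) (s : seq R).
Hypotheses (idI : is_ideal I) (reps_s : reps I s).
Variable residue : R -> 'I_(size s).
Hypothesis residueP : forall x, I (x - s`_(residue x)).
Variables (n : nat) (d : nat -> R).

Local Notation X := (@mx_of_pattern R s n).
Local Notation S := (sym_patterns n (size s)).
Local Notation upper p := (p.1 <= p.2)%N.
Local Notation D := (diag_mx (\row_(i < n) d i)).

Lemma mx_of_pattern_sym f : f \in S -> (X f)^T = X f.
Proof. by move=> /sym_patternP symf; apply/matrixP => i j; rewrite !mxE symf. Qed.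

Lemma card_diag_sandwich_cong0 :
  #|[set f in S | `[< mxcong I (D *m X f *m D) 0 >]]| =
  (\prod_(p : 'I_n * 'I_n | upper p) #|mul_kernel I s (d p.1 * d p.2)|)%N.
Proof.
rewrite -(card_sym_patterns_upper (residue 0)); apply: eq_card => f.
rewrite [f \in [set _ in _ | _]]inE [f \in [set _ in _ | _]]inE.
have [/sym_patternP symf /= | //] := boolP (f \in S).
have entry i j : (D *m X f *m D) i j - (0 : 'M_n) i j = d i * d j * s`_(f (i, j)).
  by rewrite [(0 : 'M_n) i j]mxE subr0 mul_diag_mx2 !mxE mulrAC.
apply/asboolP/forallP => [DXD0 [i j] | DXD0 i j]; rewrite ?entry.
  by apply/implyP => _; rewrite inE; apply/asboolP; rewrite -entry.
have [le_ij | /ltnW le_ji] := leqP i j.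
  by have /implyP/(_ le_ij) := DXD0 (i, j); rewrite inE => /asboolP.
have /implyP/(_ le_ji) := DXD0 (j, i); rewrite inE => /asboolP /=.
by rewrite symf [d i * _]mulrC.
Qed.

Variable U : 'M[R]_n.
Hypothesis unitU : unit_mod I U.

Definition conj_pattern f : {ffun 'I_n * 'I_n -> 'I_(size s)} :=
  [ffun p => residue ((U^T *m X f *m U) p.1 p.2)].

Lemma mx_conj_pattern f : mxcong I (X (conj_pattern f)) (U^T *m X f *m U).
Proof. by move=> i j; rewrite /mx_of_pattern mxE ffunE; exact (cong_sym idI (residueP _)). Qed.

Lemma conj_pattern_inj : injective conj_pattern.
Proof.
move=> f g fg; have := mxcong_trans idI (mxcong_sym idI (mx_conj_pattern f)).
rewrite fg => /(_ _ (mx_conj_pattern g)) /(unit_mod_conj_inj idI unitU) Xfg.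
by apply/ffunP => -[i j]; apply: (reps_inj reps_s); have := Xfg i j; rewrite !mxE.
Qed.

Lemma conj_pattern_sym f : f \in S -> conj_pattern f \in S.
Proof.
move=> /mx_of_pattern_sym symX; apply/sym_patternP => i j; rewrite !ffunE /=.
have symM : (U^T *m X f *m U)^T = U^T *m X f *m U by rewrite !trmx_mul trmxK symX mulmxA.
by rewrite -[in RHS]symM [in RHS]mxE.
Qed.

Lemma imset_conj_pattern : conj_pattern @: S = S.
Proof.
apply/eqP; rewrite eqEcard card_imset ?leqnn ?andbT; last exact: conj_pattern_inj.
by apply/subsetP => _ /imsetP[f Sf ->]; apply: conj_pattern_sym.
Qed.

Lemma card_conj_patterns (P : 'M[R]_n -> Prop) :
    (forall A B, mxcong I A B -> P A -> P B) ->
  #|[set f in S | `[< P (U^T *m X f *m U) >]]| = #|[set f in S | `[< P (X f) >]]|.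
Proof.
move=> P_cong; rewrite -(card_imset _ conj_pattern_inj); apply: eq_card => g.
rewrite [g \in [set _ in _ | _]]inE; apply/imsetP/andP => [[f] | [Sg /asboolP Pg]].
  rewrite [f \in [set _ in _ | _]]inE => /andP[Sf /asboolP Pf] ->.
  split; first exact: conj_pattern_sym.
  by apply/asboolP; apply: P_cong Pf; exact (mxcong_sym idI (mx_conj_pattern f)).
move: Sg; rewrite -{1}imset_conj_pattern => /imsetP[f Sf gf]; exists f => //.
rewrite [f \in [set _ in _ | _]]inE Sf; apply/asboolP; apply: P_cong Pg.
by rewrite gf; apply: mx_conj_pattern.
Qed.

Lemma card_GtXG_cong0 (G V : 'M[R]_n) :
  unit_mod I V -> mxcong I G (U *m D *m V) ->
  #|[set f in S | `[< mxcong I (G^T *m X f *m G) 0 >]]| =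
  (\prod_(p : 'I_n * 'I_n | upper p) #|mul_kernel I s (d p.1 * d p.2)|)%N.
Proof.
move=> unitV congG; rewrite -card_diag_sandwich_cong0.
rewrite -(card_conj_patterns (P := fun A => mxcong I (D *m A *m D) 0)).
  apply: eq_card => f; rewrite !inE; congr (_ && _); apply: asbool_equiv_eq.
  exact (smith_conj_cong0 idI (X f) (tr_diag_mx _) unitV congG).
move=> A B AB; exact (mxcong_trans idI (mxcong_sandwich idI _ _ (mxcong_sym idI AB))).
Qed.
End RandomSymmetricMatrix.

Theorem theorem2p3 (R : idomainType) (n : nat) (I : R -> Prop) (s : seq R)
  (G U V : 'M[R]_n) (d : nat -> R) :
  dedekind_domain R ->
  is_ideal I ->
  reps I s ->
  unit_mod I U -> unit_mod I V ->
  (forall i : nat, (i.+1 < n)%N ->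
     ideal_sub (principal_plus (d i.+1) I) (principal_plus (d i) I)) ->
  mxcong I G (U *m diag_mx (\row_(i < n) d i) *m V) ->
  prob_GtXG_zero I s G =
  \prod_(i < n) \prod_(j < n | (i <= j)%N)
     ((ideal_norm (principal_plus (d i * d j) I))%:R / (ideal_norm I)%:R : rat).
Proof.
move=> _ idI reps_s unitU unitV _ congG.
have [residue residueP] := choice (reps_residue reps_s).
rewrite /prob_GtXG_zero (card_GtXG_cong0 idI reps_s residueP unitU unitV congG).
rewrite (card_sym_patterns _ (residue 0)) (ideal_norm_reps idI reps_s).
rewrite pair_big_dep /= !natr_prod -prodf_div; apply: eq_bigr => p _.
by rewrite (ideal_norm_principal_plus idI reps_s residueP).
Qed.
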